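(* Let $(\mathcal{G},\mu)$ be an edge partition, $B\subseteq\mathcal{N}$, $\zeta\in\Theta_\mathcal{G}(B)$, $e\in\zeta\cap\mathcal{E}^-$ and $e'\in\mu(e)$. Then $(\zeta\setminus\{e\})\cup\{e'\}\in\Theta_\mathcal{G}(B)$.
   Context: $R$ is a partially ordered ring; $\mathcal{G}=(\mathcal{N},\mathcal{E})$ is a multidigraph with source/target maps $s,t\colon\mathcal{E}\to\mathcal{N}$, no self-loops, $\mathcal{N}=\{1,\dots,m+1\}$, labeling $\pi\colon\mathcal{E}\to R$. Trees/forests are subgraphs whose underlying undirected graph is acyclic (connected for trees); a tree is rooted at $N$ if $N$ is its only node without outgoing edges; spanning forests have node set $\mathcal{N}$ and are identified with their edge sets. $\Theta_\mathcal{G}(B)$ is the set of spanning forests with $|B|$ connected components, each a tree rooted at a node of $B$. A cycle is a closed directed path with no repeated nodes. $\mathcal{E}^-=\{e:\pi(e)\in R_{<0}\}$, $\mathcal{E}^+=\{e:\pi(e)\in R_{>0}\}$. A pair $(\mathcal{G},\mu)$ with $\mu\colon\mathcal{E}^-\to\mathcal{P}(\mathcal{E}^+)$ is an edge partition if (i) $\mathcal{E}=\mathcal{E}^+\sqcup\mathcal{E}^-$; (ii) every cycle contains at most one edge of $\mathcal{E}^-$; (iii) for each $e\in\mathcal{E}^-$: (a) $e'\in\mu(e)\Rightarrow s(e')=s(e)$; (b) $e'\in\mu(e)\Rightarrow$ every cycle containing $e'$ contains $t(e)$; (c) $\mu(e)\cap\mu(e')=\emptyset$ for $e\neq e'$.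 *)

From HB Require Import structures.
From mathcomp Require Import all_boot all_order all_algebra.
Set Implicit Arguments. Unset Strict Implicit. Unset Printing Implicit Defensive.
Import Order.TTheory GRing.Theory Num.Theory.
Local Open Scope ring_scope.

(* Multidigraph: nodes 'I_m.+1 (= {1,...,m+1}), edges a finType E,
   source/target maps s t : E -> 'I_m.+1.  Subgraphs spanning all nodes are
   identified with their edge sets F : {set E}. *)
Section Graph.
Variables (m : nat) (E : finType) (s t : E -> 'I_m.+1).

Definition uadj (F : {set E}) : rel 'I_m.+1 := fun x y =>
  [exists e in F, ((s e == x) && (t e == y)) || ((s e == y) && (t e == x))].

(* an undirected traversal of an edge: (e, true) goes s e -> t e,
   (e, false) goes t e -> s e *)
Definition uhead (p : E * bool) := if p.2 then s p.1 else t p.1.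
Definition utail (p : E * bool) := if p.2 then t p.1 else s p.1.

Definition ucycle_in (F : {set E}) (c : seq (E * bool)) : bool :=
  [&& (0 < size c)%N, all (fun p => p.1 \in F) c, uniq (map fst c),
      uniq (map uhead c) & map utail c == rot 1 (map uhead c)].

Definition acyclic (F : {set E}) : Prop := forall c, ~~ ucycle_in F c.

Definition sinkF (F : {set E}) (r : 'I_m.+1) : Prop := forall e, e \in F -> s e != r.

(* Theta_G(B): spanning forests with |B| connected components, each of them
   a tree rooted at a node of B (its unique node without outgoing edges). *)
Definition Theta (B : {set 'I_m.+1}) (F : {set E}) : Prop :=
  [/\ acyclic F,
      n_comp (uadj F) predT = #|B| &
      forall x : 'I_m.+1, exists r, [/\ r \in B, connect (uadj F) x r, sinkF F r &
         forall r', connect (uadj F) x r' -> sinkF F r' -> r' = r]].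

(* a (directed) cycle of G: closed directed path without repeated nodes,
   given by its list of edges e_0 ... e_{k-1} with t e_i = s e_{i+1 mod k} *)
Definition dcycle (c : seq E) : bool :=
  [&& (0 < size c)%N, uniq (map s c) & map t c == rot 1 (map s c)].

Definition cnodes (c : seq E) : seq 'I_m.+1 := map s c.

End Graph.

(* Edge partition (G, mu), with labeling pi : E -> R;
   E^- = {e | pi e < 0}, E^+ = {e | pi e > 0}.  mu is given as a total
   function E -> {set E}, only its values on E^- matter. *)
Definition edge_partition (R : porderZmodType) (m : nat) (E : finType)
  (s t : E -> 'I_m.+1) (pi : E -> R) (mu : E -> {set E}) : Prop :=
  [/\ forall e, (pi e < 0) || (0 < pi e),
      forall c, dcycle s t c -> (count (fun e => (pi e < 0)%R) c <= 1)%N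
      & forall e, pi e < 0 ->
        [/\ forall e', e' \in mu e -> 0 < pi e',
            forall e', e' \in mu e -> s e' = s e,
            forall e', e' \in mu e -> forall c, dcycle s t c ->
                        e' \in c -> t e \in cnodes s c &
            forall f, pi f < 0 -> f != e -> [disjoint mu e & mu f]]].

From HB Require Import structures.
From mathcomp Require Import all_boot all_order all_algebra.
Import Order.TTheory GRing.Theory Num.Theory.
Set Implicit Arguments. Unset Strict Implicit. Unset Printing Implicit Defensive.

(* Deleting [e] from [zeta] cuts its tree into the part containing [s e] and
   the part containing [t e].  Every edge of the first part still points
   towards [s e], now its only node without outgoing edge; so if [t e'] lay in
   that part, a directed path from [t e'] back to [s e = s e'] would close a
   directed cycle through [e'] missing [t e], against axiom (b) of edge
   partitions.  Hence adding [e'] reattaches the first part to another tree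
   without creating a cycle, and since [e] and [e'] leave the same node, the
   sinks, which are the roots in [B], do not change. *)

Section Forests.

Variables (m : nat) (E : finType) (s t : E -> 'I_m.+1).
Implicit Types (F G : {set E}) (f : E) (c : seq E) (w : seq (E * bool)).

Definition dadj F : rel 'I_m.+1 :=
  fun x y => [exists f in F, (s f == x) && (t f == y)].

Definition sinks F : {set 'I_m.+1} := [set r | [forall f in F, s f != r]].

Local Notation uconnect F := (connect (uadj s t F)).
Local Notation dconnect F := (connect (dadj F)).

Definition sinks_separated F :=
  {in sinks F &, forall a b, uconnect F a b -> a = b}.

Lemma sinksP F r : reflect (sinkF s F r) (r \in sinks F).
Proof. by rewrite inE; apply: (iffP forall_inP). Qed.

Lemma sinks_sub F G : F \subset G -> sinks G \subset sinks F.
Proof.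
by move=> FG; apply/subsetP => r /sinksP rG; apply/sinksP => f /(subsetP FG)/rG.
Qed.

Lemma sinks_setD1 F f r : r \in sinks (F :\ f) -> r = s f \/ r \in sinks F.
Proof.
move=> /sinksP rD; have [<-|sfr] := eqVneq (s f) r; [by left | right].
apply/sinksP => g gF; have [->|gf] := eqVneq g f; first by [].
by apply: rD; rewrite !inE gf.
Qed.

Lemma sinks_exchange F f f' :
  s f' = s f -> f \in F -> sinks (f' |: F :\ f) = sinks F.
Proof.
move=> sf' fF; apply/setP => r; apply/sinksP/sinksP => rF g.
  move=> gF; have [->|gf] := eqVneq g f; last by apply: rF; rewrite !inE gf gF orbT.
  by rewrite -sf'; apply: rF; rewrite setU11.
by case/setU1P => [->|/setD1P[_ gF]]; rewrite ?sf'; apply: rF.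
Qed.

Lemma uadj_sym F : symmetric (uadj s t F).
Proof.
by move=> x y; apply/existsP/existsP => -[f /andP[fF H]]; exists f; rewrite fF orbC.
Qed.

Lemma uconnect_sym F : connect_sym (uadj s t F).
Proof. exact/sym_connect_sym/uadj_sym. Qed.

Lemma uadj_edge F f : f \in F -> uadj s t F (s f) (t f).
Proof. by move=> fF; apply/existsP; exists f; rewrite fF !eqxx. Qed.

Lemma dadj_edge F f : f \in F -> dadj F (s f) (t f).
Proof. by move=> fF; apply/existsP; exists f; rewrite fF !eqxx. Qed.

Lemma uconnect_sub F G x y : F \subset G -> uconnect F x y -> uconnect G x y.
Proof.
move=> FG; apply: connect_sub => {}x {}y /existsP[f /andP[fF H]].
by apply/connect1/existsP; exists f; rewrite (subsetP FG _ fF).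
Qed.

Lemma dconnect_sub F G x y : F \subset G -> dconnect F x y -> dconnect G x y.
Proof.
move=> FG; apply: connect_sub => {}x {}y /existsP[f /andP[fF H]].
by apply/connect1/existsP; exists f; rewrite (subsetP FG _ fF).
Qed.

Lemma dconnect_uconnect F x y : dconnect F x y -> uconnect F x y.
Proof.
apply: connect_sub => {}x {}y /existsP[f /andP[fF /andP[/eqP <- /eqP <-]]].
exact/connect1/uadj_edge.
Qed.

Lemma dconnect_from_sink F r y : r \in sinks F -> dconnect F r y -> y = r.
Proof.
move=> /sinksP rF /connectP[[|z p] /=]; first by move=> _ ->.
by case/andP=> /existsP[f /and3P[fF /eqP sf _]]; case/eqP: (rF f fF).
Qed.

Lemma walk_uconnect F w x :
  all (fun q => q.1 \in F) w ->
  map (uhead s t) w = belast x (map (utail s t) w) ->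
  uconnect F x (last x (map (utail s t) w)).
Proof.
elim: w x => [|q w IHw] x //= /andP[qF wF] [hq hw].
apply: connect_trans (IHw _ wF hw).
apply/connect1/existsP; exists q.1; rewrite qF -hq /uhead /utail.
by case: q.2; rewrite !eqxx ?orbT.
Qed.

Lemma ucycle_uconnect_setD1 F w q :
  ucycle_in s t F w -> q \in w ->
  uconnect (F :\ q.1) (utail s t q) (uhead s t q).
Proof.
case/and5P=> _ wF uw _ /eqP ht qw.
pose w' := rot (index q w) w.
have w'E : w' = q :: (drop (index q w).+1 w ++ take (index q w) w).
  by rewrite /w' rot_index.
set p := drop _ _ ++ _ in w'E.
have ht' : map (utail s t) w' = rot 1 (map (uhead s t) w').
  by rewrite /w' !map_rot ht rot_rot.
have uw' : uniq (map fst w') by rewrite /w' map_rot rot_uniq.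
have w'F : all (fun q => q.1 \in F) w'.
  by apply/allP => q'; rewrite /w' mem_rot; apply: (allP wF).
rewrite w'E /= rot1_cons in ht'; rewrite w'E /= in uw' w'F.
case/andP: uw' => qp _; case/andP: w'F => _ pF.
have := lastI (utail s t q) (map (utail s t) p).
rewrite ht' => /rcons_inj[hh ht''].
rewrite ht''; apply: walk_uconnect; last by rewrite hh.
apply/allP => q' q'p; rewrite !inE (allP pF _ q'p) andbT.
by apply: contraNneq qp => <-; apply: map_f.
Qed.

Lemma upath_edges G x p :
  uniq (x :: p) -> path (uadj s t G) x p ->
  exists w, [/\ all (fun q => q.1 \in G) w, uniq (map fst w),
    map (uhead s t) w = belast x p, map (utail s t) w = p &
    forall q, q \in w -> (s q.1 \in x :: p) && (t q.1 \in x :: p)].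
Proof.
elim: p x => [|y p IHp] x; first by exists [::].
rewrite /= => /andP[xyp uyp] /andP[/existsP[g /andP[gG hg]] pp].
have [w [wG uw hw tw ew]] := IHp y uyp pp.
have [q0 [q0E hq0 tq0]] :
    exists q0 : E * bool, [/\ q0.1 = g, uhead s t q0 = x & utail s t q0 = y].
  by case/orP: hg => /andP[/eqP h1 /eqP h2]; [exists (g, true) | exists (g, false)].
exists (q0 :: w); split => //=.
- by rewrite q0E gG.
- rewrite uw andbT q0E; apply/mapP => -[q qw gq].
  have /andP[sq tq] := ew q qw.
  case/orP: hg => /andP[/eqP h1 /eqP h2].
    by move: sq; rewrite -gq h1 => sq; rewrite sq in xyp.
  by move: tq; rewrite -gq h2 => tq; rewrite tq in xyp.
- by rewrite hq0 hw.
- by rewrite tq0 tw.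
move=> q /predU1P[-> | qw].
  by rewrite q0E; case/orP: hg => /andP[/eqP -> /eqP ->]; rewrite !inE !eqxx ?orbT.
by have /andP[h1 h2] := ew q qw; rewrite inE h1 orbT inE h2 orbT.
Qed.

Lemma dpath_edges G x p :
  path (dadj G) x p ->
  exists c, [/\ {subset c <= G}, map s c = belast x p & map t c = p].
Proof.
elim: p x => [|y p IHp] x; first by exists [::].
rewrite /= => /andP[/existsP[g /andP[gG /andP[/eqP h1 /eqP h2]]] pp].
have [c [cG hc tc]] := IHp y pp.
exists (g :: c); rewrite /= hc tc h1 h2; split=> // f /predU1P[-> //|].
exact: cG.
Qed.

Lemma acyclic_sub F G : G \subset F -> acyclic s t F -> acyclic s t G.
Proof.
move=> GF acF w; apply: contra (acF w); rewrite /ucycle_in.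
case/and5P=> c0 wG uw uh ht; apply/and5P; split=> //.
by apply/allP => q /(allP wG)/(subsetP GF).
Qed.

Lemma acyclic_uconnect_setD1 F f :
  acyclic s t F -> f \in F -> ~~ uconnect (F :\ f) (s f) (t f).
Proof.
move=> acF fF; apply/negP; rewrite uconnect_sym => /connectP[p pp lp].
case: (shortenP pp) lp => p' pp' up' _ lp'.
have [w [wG uw hw tw _]] := upath_edges up' pp'.
apply: (negP (acF (rcons w (f, true)))).
rewrite /ucycle_in size_rcons all_rcons fF /=; apply/and4P; split.
- by apply/allP => q /(allP wG); rewrite inE => /andP[].
- rewrite map_rcons rcons_uniq uw andbT; apply/mapP => -[q qw /= fq].
  by have := allP wG q qw; rewrite -fq !inE eqxx.
- by rewrite map_rcons hw /uhead /= lp' -lastI.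
- by rewrite !map_rcons hw tw /uhead /utail /= lp' -lastI rot1_cons.
Qed.

Lemma acyclic_setU1 G f :
  acyclic s t G -> ~~ uconnect G (s f) (t f) -> acyclic s t (f |: G).
Proof.
move=> acG sf_tf w; apply/negP => cw; have [fw | fNw] := boolP (f \in map fst w).
  have sub_G : (f |: G) :\ f \subset G.
    by apply/subsetP => g; rewrite !inE => /andP[/negPf ->].
  case/mapP: fw => q qw qf; have := ucycle_uconnect_setD1 cw qw.
  rewrite /utail /uhead -qf => /(uconnect_sub sub_G) h; apply: (negP sf_tf).
  by case: q.2 h => //; rewrite uconnect_sym.
apply: (negP (acG w)); case/and5P: cw => c0 wF uw uh ht; apply/and5P; split=> //.
apply/allP => q qw; case/setU1P: (allP wF q qw) => // qf.
by case/negP: fNw; rewrite -qf map_f.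
Qed.

Lemma acyclic_no_dcycle F c : acyclic s t F -> dcycle s t c -> ~ {subset c <= F}.
Proof.
move=> acF /and3P[c0 us /eqP ht] cF; apply: (negP (acF [seq (g, true) | g <- c])).
have fstE : map fst [seq (g, true) | g <- c] = c by rewrite -map_comp map_id.
rewrite /ucycle_in size_map c0 fstE -!map_comp us ht eqxx (map_uniq us) !andbT.
by rewrite all_map; apply/allP => g /cF.
Qed.

Lemma dpath_close_dcycle G f :
  dconnect G (t f) (s f) ->
  exists c, [/\ dcycle s t (f :: c), {subset c <= G} &
                forall x, x \in cnodes s (f :: c) -> dconnect G (t f) x].
Proof.
move=> tf_sf; case/connectP: (tf_sf) => p pp.
case: (shortenP pp) => p' pp' up' _ lp.
have [c [cG hc tc]] := dpath_edges pp'.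
exists c; split=> //.
  rewrite /dcycle /= hc tc lp rot1_cons -lastI eqxx andbT.
  by move: up'; rewrite lastI rcons_uniq.
move=> x; rewrite /cnodes /= hc => /predU1P[-> //|/mem_belast].
exact: (path_connect pp').
Qed.

Lemma acyclic_no_dpath_back F f :
  acyclic s t F -> f \in F -> ~~ dconnect F (t f) (s f).
Proof.
move=> acF fF; apply/negP => /dpath_close_dcycle[c [cyc cF _]].
by apply: (acyclic_no_dcycle acF cyc) => g /predU1P[-> //|/cF].
Qed.

Lemma dconnect_sink F x : acyclic s t F -> exists2 r, dconnect F x r & r \in sinks F.
Proof.
(* A node reaching as few nodes as possible is a sink: the target of an edge
   out of it reaches strictly fewer, as acyclicity forbids a way back. *)
move=> acF; pose reach y := #|[set z | dconnect F y z]|.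
case: (arg_minnP reach (connect0 (dadj F) x)) => r xr r_min.
exists r => //; apply/sinksP => f fF; apply/eqP => sfr.
have r_tf : dadj F r (t f) by rewrite -sfr dadj_edge.
have : reach (t f) < reach r.
  apply/proper_card/properP; split.
    by apply/subsetP => z; rewrite !inE; apply/connect_trans/connect1.
  exists r; first by rewrite inE connect0.
  by rewrite inE -sfr (acyclic_no_dpath_back acF fF).
by rewrite ltnNge r_min // (connect_trans xr) ?connect1.
Qed.

Lemma uconnect_setU1 G f a b :
  uconnect (f |: G) a b ->
  uconnect G a b \/
  (uconnect G a (s f) || uconnect G a (t f)) && (uconnect G b (s f) || uconnect G b (t f)).
Proof.
move=> ab; pose near z := uconnect G z (s f) || uconnect G z (t f).
have near_trans x y : uconnect G x y -> near y -> near x.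
  by move=> xy /orP[] yf; apply/orP; [left | right]; apply: connect_trans yf.
pose R x y := uconnect G x y || near x && near y.
have R_trans x y z : R x y -> R y z -> R x z.
  case/orP=> [xy | /andP[nx ny]] /orP[yz | /andP[ny' nz]]; rewrite /R.
  - by rewrite (connect_trans xy yz).
  - by rewrite (near_trans _ _ xy ny') nz orbT.
  - by rewrite nx (near_trans z y) ?orbT // uconnect_sym.
  - by rewrite nx nz orbT.
have R_step x y : uadj s t (f |: G) x y -> R x y.
  case/existsP=> g /andP[/setU1P[-> | gG] hg]; last first.
    by rewrite /R connect1 //; apply/existsP; exists g; rewrite gG.
  by case/orP: hg => /andP[/eqP <- /eqP <-]; rewrite /R /near !connect0 !orbT.
suff: R a b by rewrite /R => /orP[]; [left | right].
case/connectP: ab => p pp ->{b}; elim: p a pp => [|y p IHp] a /=.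
  by rewrite /R connect0.
by case/andP=> /R_step ay /IHp; apply: R_trans.
Qed.

Lemma n_comp_sinks F :
  acyclic s t F -> sinks_separated F -> n_comp (uadj s t F) predT = #|sinks F|.
Proof.
move=> acF sepF; have Fsym := uconnect_sym F.
rewrite -(@card_in_imset _ _ (fingraph.root (uadj s t F)) (sinks F)); last first.
  by move=> r1 r2 r1F r2F /(fingraph.rootP Fsym); apply: sepF.
apply: eq_card => x; rewrite !inE andbT; apply/idP/imsetP => [x_root | [r _ ->]].
  have [r xr rF] := dconnect_sink x acF; exists r => //.
  by rewrite -(eqP x_root); apply/(fingraph.rootP Fsym)/dconnect_uconnect.
exact: roots_root.
Qed.

Lemma ThetaP B F :
  Theta s t B F <-> [/\ acyclic s t F, sinks_separated F & sinks F = B].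
Proof.
split.
  case=> acF ncF rootF.
  have sepF : sinks_separated F.
    move=> a b /sinksP aF /sinksP bF ab; have [r [_ _ _ r_uniq]] := rootF a.
    by rewrite (r_uniq a (connect0 _ _) aF) (r_uniq b ab bF).
  split=> //; apply/eqP; rewrite eqEcard -ncF (n_comp_sinks acF sepF) leqnn andbT.
  apply/subsetP => z /sinksP zF; have [r [rB _ _ r_uniq]] := rootF z.
  by rewrite (r_uniq z (connect0 _ _) zF).
case=> acF sepF sinksB; split=> //; first by rewrite n_comp_sinks // sinksB.
move=> x; have [r xr rF] := dconnect_sink x acF.
exists r; split; rewrite -?sinksB; [by [] | exact: dconnect_uconnect | exact/sinksP |].
move=> r' xr' /sinksP r'F; apply: sepF => //.
by rewrite uconnect_sym in xr'; apply: connect_trans xr' (dconnect_uconnect xr).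
Qed.

End Forests.

Section Exchange.

Variables (m : nat) (E : finType) (s t : E -> 'I_m.+1) (zeta : {set E}) (e e' : E).
Hypotheses (acyclic_zeta : acyclic s t zeta) (separated_zeta : sinks_separated s t zeta).
Hypotheses (e_zeta : e \in zeta) (source_e' : s e' = s e).
Hypothesis cycle_e' : forall c, dcycle s t c -> e' \in c -> t e \in cnodes s c.

Local Notation D := (zeta :\ e).
Local Notation uconnect F := (connect (uadj s t F)).
Local Notation dconnect F := (connect (dadj s t F)).

Let D_zeta : D \subset zeta := subD1set zeta e.
Let acyclic_D : acyclic s t D := acyclic_sub D_zeta acyclic_zeta.
Let e_cut : ~~ uconnect D (s e) (t e) := acyclic_uconnect_setD1 acyclic_zeta e_zeta.

Lemma target_drains_to_sink : exists2 r, dconnect D (t e) r & r \in sinks s zeta.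
Proof.
have [r te_r /sinks_setD1[r_se | ]] := dconnect_sink (t e) acyclic_D; last by exists r.
case/negP: (acyclic_no_dpath_back acyclic_zeta e_zeta).
by rewrite -r_se (dconnect_sub D_zeta te_r).
Qed.

Lemma source_comp_drains y : uconnect D (s e) y -> dconnect D y (s e).
Proof.
move=> se_y; have [z y_z /sinks_setD1[<- // | z_sink]] := dconnect_sink y acyclic_D.
have [r te_r r_sink] := target_drains_to_sink.
have se_z : uconnect D (s e) z := connect_trans se_y (dconnect_uconnect y_z).
have z_r : z = r.
  apply: separated_zeta => //; rewrite uconnect_sym in se_z.
  apply: connect_trans (uconnect_sub D_zeta se_z) _.
  apply: connect_trans (connect1 (uadj_edge s t e_zeta)) _.
  exact: uconnect_sub D_zeta (dconnect_uconnect te_r).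
case/negP: e_cut; apply: connect_trans se_z _.
by rewrite z_r uconnect_sym dconnect_uconnect.
Qed.

Lemma source_comp_sinkless a : uconnect D (s e) a -> a \notin sinks s zeta.
Proof.
move=> se_a; apply/negP => a_sink.
have a_sinkD : a \in sinks s D := subsetP (sinks_sub s D_zeta) _ a_sink.
move: a_sink; rewrite -(dconnect_from_sink a_sinkD (source_comp_drains se_a)).
by move/sinksP/(_ e e_zeta); rewrite eqxx.
Qed.

Lemma target_e'_cut : ~~ uconnect D (s e') (t e').
Proof.
rewrite source_e'; apply/negP => se_te'.
have te'_se' : dconnect D (t e') (s e') by rewrite source_e' source_comp_drains.
have [c [cyc _ c_nodes]] := dpath_close_dcycle te'_se'.
have te'_te := c_nodes _ (cycle_e' cyc (mem_head _ _)).
by case/negP: e_cut; apply: connect_trans se_te' (dconnect_uconnect te'_te).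
Qed.

Lemma exchange_acyclic : acyclic s t (e' |: D).
Proof. exact: acyclic_setU1 acyclic_D target_e'_cut. Qed.

Lemma exchange_sinks_separated : sinks_separated s t (e' |: D).
Proof.
have near_te' x : x \in sinks s zeta ->
    uconnect D x (s e') || uconnect D x (t e') -> uconnect D x (t e').
  move=> x_sink /orP[x_se' | //]; rewrite source_e' uconnect_sym in x_se'.
  by case/negP: (source_comp_sinkless x_se').
rewrite /sinks_separated sinks_exchange //.
move=> a b a_sink b_sink /uconnect_setU1[ab | /andP[a_near b_near]].
  exact: separated_zeta (uconnect_sub D_zeta ab).
apply: separated_zeta => //; apply: (uconnect_sub D_zeta).
apply: connect_trans (near_te' a a_sink a_near) _.
by rewrite uconnect_sym near_te'.
Qed.

End Exchange.

Local Open Scope ring_scope.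

Theorem lemma3p4 (R : porderZmodType) (m : nat) (E : finType)
  (s t : E -> 'I_m.+1) (pi : E -> R) (mu : E -> {set E})
  (no_loops : forall e, s e != t e)
  (Hpart : edge_partition s t pi mu)
  (B : {set 'I_m.+1}) (zeta : {set E})
  (Hzeta : Theta s t B zeta)
  (e : E) (he : e \in zeta) (he_neg : pi e < 0)
  (e' : E) (he' : e' \in mu e) :
  Theta s t B (e' |: (zeta :\ e)).
Proof.
case: Hpart => _ _ /(_ e he_neg)[_ mu_source mu_cycle _].
have source_e' := mu_source e' he'.
case/ThetaP: Hzeta => acyclic_zeta separated_zeta sinks_zeta.
apply/ThetaP; split.
- exact: exchange_acyclic acyclic_zeta separated_zeta he source_e' (mu_cycle e' he').
- exact: exchange_sinks_separated acyclic_zeta separated_zeta he source_e'.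
- by rewrite sinks_exchange.
Qed.
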